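(* Let $n\ge27$, $\mathcal{X},\mathcal{Y}$ finite with $|\mathcal{X}|,|\mathcal{Y}|\ge2$, and $\mathbf{X}$ a random vector on $\mathcal{X}^n$. Let $w,\tilde w\in\mathcal{P}(\mathcal{Y}|\mathcal{X})$. For every discrete random variable $U$ such that $U,\mathbf{X}$ are jointly distributed (with channel outputs generated from $\mathbf{X}$ alone), every $u$ in the support of $U$, and every $\mathbf{y}\in\mathcal{Y}^n$ with $\tilde w_n(\mathbf{y}|u)>0$, $$\log_2\frac{w_n(\mathbf{y}|u)}{\tilde w_n(\mathbf{y}|u)}\le n\sup_{\hat w\in\mathcal{P}(\mathcal{Y}|\mathcal{X}),\ \hat p\in\mathcal{P}(\mathcal{X})}\mathbb{D}_{\hat w}(w\|\tilde w|\hat p)+2|\mathcal{X}||\mathcal{Y}|\log_2 n.$$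
   Context: $\mathcal{P}(\mathcal{Y}|\mathcal{X})$ is the set of conditional distributions from $\mathcal{X}$ to $\mathcal{Y}$ and $\mathcal{P}(\mathcal{X})$ the set of distributions on $\mathcal{X}$. $w_n(\mathbf{y}|u)=\sum_{\mathbf{x}}w^n(\mathbf{y}|\mathbf{x})p_{\mathbf{X}|U}(\mathbf{x}|u)$ with $w^n(\mathbf{y}|\mathbf{x})=\prod_t w(y_t|x_t)$, and similarly $\tilde w_n$. $\mathbb{D}_{\hat w}(w\|\tilde w|\hat p)=\sum_{y,x}\hat w(y|x)\hat p(x)\log_2\frac{w(y|x)}{\tilde w(y|x)}$. *)

From HB Require Import structures.
From mathcomp Require Import all_boot all_order all_algebra.
From mathcomp Require Import all_classical all_reals all_analysis.
Set Implicit Arguments. Unset Strict Implicit. Unset Printing Implicit Defensive.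
Import Order.TTheory GRing.Theory Num.Theory.
Local Open Scope ring_scope.

Definition log2 (R : realType) (x : R) : R := ln x / ln 2.

(* extended-real log2 (a / b) for a, b >= 0, with the conventions
   log(0/0) = 0, log(0/b) = -oo (b>0), log(a/0) = +oo (a>0) *)
Definition log2ratio (R : realType) (a b : R) : \bar R :=
  if a == 0 then (if b == 0 then 0%E else -oo%E)
  else if b == 0 then +oo%E else (log2 (a / b))%:E.

Definition is_dist (R : realType) (T : finType) (p : T -> R) : Prop :=
  (forall t, 0 <= p t) /\ \sum_(t : T) p t = 1.

Definition is_channel (R : realType) (X Y : finType) (w : X -> Y -> R) : Prop :=
  forall x, is_dist (w x).

Definition chan_n (R : realType) (X Y : finType) (n : nat) (w : X -> Y -> R)
  (x : {ffun 'I_n -> X}) (y : {ffun 'I_n -> Y}) : R :=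
  \prod_(t < n) w (x t) (y t).

(* w_n(y|u) = sum_x w^n(y|x) p_{X|U}(x|u), where pXu = p_{X|U}(.|u) *)
Definition chan_nU (R : realType) (X Y : finType) (n : nat) (w : X -> Y -> R)
  (pXu : {ffun 'I_n -> X} -> R) (y : {ffun 'I_n -> Y}) : R :=
  \sum_(x : {ffun 'I_n -> X}) chan_n w x y * pXu x.

(* D_{hw}(w || tw | hp) = sum_{y,x} hw(y|x) hp(x) log2 (w(y|x)/tw(y|x)),
   in the extended reals (0 * (+-oo) = 0) *)
Definition condD (R : realType) (X Y : finType) (hw w tw : X -> Y -> R)
  (hp : X -> R) : \bar R :=
  (\sum_(y : Y) \sum_(x : X) (hw x y * hp x)%:E * log2ratio (w x y) (tw x y))%E.

Definition supD (R : realType) (X Y : finType) (w tw : X -> Y -> R) : \bar R :=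
  ereal_sup [set condD hw w tw hp | hw in [set hw | is_channel hw] &
                                    hp in [set hp | is_dist hp]]%classic.

From HB Require Import structures.
From mathcomp Require Import all_boot all_order all_algebra.
From mathcomp Require Import all_classical all_reals all_analysis.
Import Order.TTheory GRing.Theory Num.Theory.
Local Open Scope ring_scope.

(* Choosing point masses for hw and hp shows that supD w tw dominates every
   single-letter ratio log2 (w(y|x) / tw(y|x)); in particular it is +oo unless
   w(.|x) << tw(.|x) for all x.  Otherwise w <= r tw pointwise, r being the
   largest letter ratio, so w^n <= r^n tw^n and, mixing over x, the same bound
   holds for w_n(y|u) and tw_n(y|u).  Hence the left-hand side is at most
   n log2 r <= n supD w tw, and the logarithmic term is nonnegative slack. *)

Section Log2.
Context {R : realType}.

Lemma log2Xn (r : R) (n : nat) : 0 < r -> log2 (r ^+ n) = n%:R * log2 r.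
Proof. by move=> r_gt0; rewrite /log2 lnXn // mulr_natl mulrnAl. Qed.

Lemma log2ratio_le_log2 {a b c : R} :
  0 <= a -> 0 < b -> a <= c * b -> (log2ratio a b <= (log2 c)%:E)%E.
Proof.
move=> a_ge0 b_gt0 a_le; rewrite /log2ratio (gt_eqF b_gt0).
have [_|a_neq0] := eqVneq a 0; first exact: leNye.
have ab_gt0 : 0 < a / b by rewrite divr_gt0 // lt_neqAle eq_sym a_neq0.
have ab_le : a / b <= c by rewrite ler_pdivrMr.
rewrite lee_fin ler_pM2r ?invr_gt0 ?ln_gt0 ?ltr1n // ler_ln //.
by rewrite posrE (lt_le_trans ab_gt0).
Qed.

End Log2.

Definition point_mass {R : realType} {T : finType} (t0 t : T) : R :=
  if t == t0 then 1 else 0.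

Lemma point_mass_dist {R : realType} {T : finType} (t0 : T) :
  is_dist (point_mass t0 : T -> R).
Proof.
split=> [t|]; first by rewrite /point_mass; case: ifP.
by rewrite -big_mkcond big_pred1_eq.
Qed.

Section SupD.
Context {R : realType} {X Y : finType} (w tw : X -> Y -> R).

Lemma condD_point_mass x0 y0 :
  condD (fun=> point_mass y0) w tw (point_mass x0)
  = log2ratio (w x0 y0) (tw x0 y0).
Proof.
rewrite /condD (bigD1 y0) //= [X in (_ + X)%E]big1 => [|y y_neq]; last first.
  by rewrite big1 // => x _; rewrite /point_mass (negbTE y_neq) mul0r mul0e.
rewrite (bigD1 x0) //= big1 => [|x x_neq].
  by rewrite /point_mass !eqxx mulr1 mul1e !adde0.
by rewrite /point_mass (negbTE x_neq) mulr0 mul0e.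
Qed.

Lemma log2ratio_le_supD x y : (log2ratio (w x y) (tw x y) <= supD w tw)%E.
Proof.
rewrite -condD_point_mass; apply: ereal_sup_ubound => /=.
exists (fun=> point_mass y); first by move=> ?; exact: point_mass_dist.
by exists (point_mass x); first exact: point_mass_dist.
Qed.

Lemma supD_pinfty x y : 0 < w x y -> tw x y = 0 -> supD w tw = +oo%E.
Proof.
move=> w_gt0 tw0; apply/eqP; rewrite -leye_eq.
by have := log2ratio_le_supD x y; rewrite /log2ratio tw0 eqxx (gt_eqF w_gt0).
Qed.

Lemma max_ratio_dominates (xy0 : X * Y) :
  (forall x y, 0 <= tw x y) -> (forall x y, tw x y = 0 -> w x y = 0) ->
  exists xy : X * Y, forall x y, w x y <= w xy.1 xy.2 / tw xy.1 xy.2 * tw x y.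
Proof.
move=> tw_ge0 tw0_w0.
have [[xm ym] _ ratio_max] :=
  @arg_maxP _ _ (X * Y)%type xy0 xpredT
    (fun xy => w xy.1 xy.2 / tw xy.1 xy.2) isT.
exists (xm, ym) => x y /=; have [tw0|tw_neq0] := eqVneq (tw x y) 0.
  by rewrite tw0 tw0_w0 // mulr0.
have tw_gt0 : 0 < tw x y by rewrite lt_neqAle eq_sym tw_neq0 tw_ge0.
by rewrite -ler_pdivrMr //; exact: (ratio_max (x, y)).
Qed.

End SupD.

Section ScaledDomination.
Context {R : realType} {X Y : finType} {n : nat} {w tw : X -> Y -> R} {r : R}.
Hypotheses (w_ge0 : forall x y, 0 <= w x y)
           (w_le : forall x y, w x y <= r * tw x y).

Lemma chan_n_le_scale (x : {ffun 'I_n -> X}) (y : {ffun 'I_n -> Y}) :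
  chan_n w x y <= r ^+ n * chan_n tw x y.
Proof.
rewrite -[n in r ^+ n]card_ord -prodr_const /chan_n -big_split /=.
by apply: ler_prod => t _; rewrite w_ge0 w_le.
Qed.

Lemma chan_nU_le_scale {p : {ffun 'I_n -> X} -> R} (y : {ffun 'I_n -> Y}) :
  (forall x, 0 <= p x) -> chan_nU w p y <= r ^+ n * chan_nU tw p y.
Proof.
move=> p_ge0; rewrite /chan_nU mulr_sumr; apply: ler_sum => x _.
by rewrite mulrA ler_wpM2r ?chan_n_le_scale.
Qed.

End ScaledDomination.

Lemma chan_nU_ge0 {R : realType} {X Y : finType} {n : nat} {w : X -> Y -> R}
  {p : {ffun 'I_n -> X} -> R} (y : {ffun 'I_n -> Y}) :
  (forall x y, 0 <= w x y) -> (forall x, 0 <= p x) -> 0 <= chan_nU w p y.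
Proof.
move=> w_ge0 p_ge0; apply: sumr_ge0 => x _.
by rewrite mulr_ge0 // prodr_ge0.
Qed.

Section MixtureRatio.
Context {R : realType} {X Y : finType} {n : nat} (w tw : X -> Y -> R).
Context (p : {ffun 'I_n -> X} -> R) (y : {ffun 'I_n -> Y}).
Hypotheses (n_gt0 : (0 < n)%N)
           (w_ge0 : forall x y, 0 <= w x y) (tw_ge0 : forall x y, 0 <= tw x y)
           (p_ge0 : forall x, 0 <= p x) (b_gt0 : 0 < chan_nU tw p y).

Lemma log2ratio_chan_nU_abs_cont : (forall x y, tw x y = 0 -> w x y = 0) ->
  (log2ratio (chan_nU w p y) (chan_nU tw p y) <= n%:R%:E * supD w tw)%E.
Proof.
move=> tw0_w0.
have [x0 _] : exists x : {ffun 'I_n -> X}, true.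
  case: (pickP (predT : pred {ffun 'I_n -> X})) => [x _|noX]; first by exists x.
  by move: b_gt0; rewrite /chan_nU big_pred0 ?ltxx.
have [[xm ym] dom] :=
  max_ratio_dominates w tw (x0 (Ordinal n_gt0), y (Ordinal n_gt0))
    tw_ge0 tw0_w0.
(* [r] may be the junk value [w / 0 = 0]; [a <> 0] rules this out. *)
set r := w xm ym / tw xm ym in dom.
have ab_le := chan_nU_le_scale w_ge0 dom y p_ge0.
have [a0|a_neq0] := eqVneq (chan_nU w p y) 0.
  by rewrite /log2ratio a0 eqxx (gt_eqF b_gt0) leNye.
have r_neq0 : r != 0.
  apply: contra_neq a_neq0 => r0; apply/le_anti; rewrite chan_nU_ge0 // andbT.
  by rewrite (le_trans ab_le) // r0 expr0n gtn_eqF // mul0r.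
have r_gt0 : 0 < r by rewrite lt_neqAle eq_sym r_neq0 divr_ge0.
have log2r_le : ((log2 r)%:E <= supD w tw)%E.
  have tw_neq0 : tw xm ym != 0.
    by apply: contra_neq r_neq0 => tw0; rewrite /r tw0 invr0 mulr0.
  have w_neq0 : w xm ym != 0.
    by apply: contra_neq r_neq0 => w0; rewrite /r w0 mul0r.
  have := log2ratio_le_supD w tw xm ym.
  by rewrite /log2ratio (negbTE w_neq0) (negbTE tw_neq0).
apply: (le_trans (log2ratio_le_log2 (chan_nU_ge0 y w_ge0 p_ge0) b_gt0 ab_le)).
rewrite log2Xn // EFinM; apply: lee_wpmul2l log2r_le.
by rewrite lee_fin ler0n.
Qed.

Lemma log2ratio_chan_nU_le_supD :
  (log2ratio (chan_nU w p y) (chan_nU tw p y) <= n%:R%:E * supD w tw)%E.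
Proof.
have [/existsP [[x y'] /andP [/= w_gt0 /eqP tw0]] | ] :=
  boolP [exists xy : X * Y, (0 < w xy.1 xy.2) && (tw xy.1 xy.2 == 0)].
  by rewrite (supD_pinfty w tw x y' w_gt0 tw0) gt0_muley ?lte_fin ?ltr0n ?leey.
rewrite negb_exists => /forallP abs_cont.
apply: log2ratio_chan_nU_abs_cont => x y' tw0; apply/le_anti.
rewrite w_ge0 andbT leNgt.
by have := abs_cont (x, y'); rewrite /= tw0 eqxx andbT.
Qed.

End MixtureRatio.

Theorem lemma31 (R : realType) (X Y : finType) (n : nat)
  (hn : (27 <= n)%N) (hX : (2 <= #|X|)%N) (hY : (2 <= #|Y|)%N)
  (w tw : X -> Y -> R) (hw : is_channel w) (htw : is_channel tw)
  (U : choiceType) (P : U -> {ffun 'I_n -> X} -> R)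
  (hP0 : forall u x, 0 <= P u x)
  (hP1 : (\esum_(ux in [set: U * {ffun 'I_n -> X}]) (P ux.1 ux.2)%:E = 1)%E)
  (u : U) (hu : 0 < \sum_(x : {ffun 'I_n -> X}) P u x)
  (y : {ffun 'I_n -> Y}) :
  let pXu := fun x => P u x / \sum_(x' : {ffun 'I_n -> X}) P u x' in
  0 < chan_nU tw pXu y ->
  (log2ratio (chan_nU w pXu y) (chan_nU tw pXu y)
    <= n%:R%:E * supD w tw + (2 * #|X|%:R * #|Y|%:R * log2 (n%:R : R))%:E)%E.
Proof.
move=> pXu b_gt0.
have n_gt0 : (0 < n)%N by apply: leq_trans hn.
have slack_ge0 : 0 <= 2 * #|X|%:R * #|Y|%:R * log2 (n%:R : R).
  by rewrite mulr_ge0 // divr_ge0 ?ln_ge0 ?ler1n // ltW // ln_gt0 // ltr1n.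
apply: le_trans (leeDl _ _); last by rewrite lee_fin.
apply: log2ratio_chan_nU_le_supD => //.
- by move=> x y'; case: (hw x).
- by move=> x y'; case: (htw x).
- by move=> x; rewrite /pXu divr_ge0 // ltW.
Qed.
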